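(* Let $(A,\succ,\prec)$ be a finite-dimensional dendriform algebra with associated product $*$, and let $r\in A\otimes A$ be a symmetric solution of the $D$-equation $r_{12}*r_{13}=r_{13}\prec r_{23}+r_{23}\succ r_{12}$. Let $T_r$ be $A\oplus A^*$ with the product $x\star y=x*y$, $a^*\star b^*=R_\prec^*(r(a^* ))b^*+L_\succ^*(r(b^* ))a^*$, $x\star a^*=x*r(a^* )-r(R_\prec^*(x)a^* )+R_\prec^*(x)a^*$, $a^*\star x=r(a^* )*x-r(L_\succ^*(x)a^* )+L_\succ^*(x)a^*$ ($x,y\in A$, $a^*,b^*\in A^*$), and let $A\ltimes_{R_\prec^*,L_\succ^*}A^*$ be $A\oplus A^*$ with product $(x+a^* )(y+b^* )=x*y+R_\prec^*(x)b^*+L_\succ^*(y)a^*$. Let $\omega(x+a^*,y+b^* )=-\langle x,b^*\rangle+\langle a^*,y\rangle$. Then both are associative algebras on which $\omega$ is a Connes cocycle, and there exists an isomorphism of associative algebras $\varphi:A\ltimes_{R_\prec^*,L_\succ^*}A^*\to T_r$ with $\omega(\varphi(u),\varphi(v))=\omega(u,v)$ for all $u,v$.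
   Context: A dendriform algebra is a vector space with bilinear products $\prec,\succ$ such that, writing $x*y=x\prec y+x\succ y$: $(x\prec y)\prec z=x\prec(y*z)$, $(x\succ y)\prec z=x\succ(y\prec z)$, $x\succ(y\succ z)=(x*y)\succ z$. $\langle L_\succ^*(x)a^*,y\rangle=\langle a^*,x\succ y\rangle$, $\langle R_\prec^*(x)a^*,y\rangle=\langle a^*,y\prec x\rangle$. Symmetric: $\sigma(r)=r$, $\sigma(u\otimes v)=v\otimes u$. $r$ is regarded as a map $A^*\to A$ by $\langle u^*\otimes v^*,r\rangle=\langle u^*,r(v^* )\rangle$. For $r=\sum_i x_i\otimes y_i$: $r_{12}*r_{13}=\sum_{i,j}x_i*x_j\otimes y_i\otimes y_j$, $r_{13}\prec r_{23}=\sum_{i,j}x_i\otimes x_j\otimes y_i\prec y_j$, $r_{23}\succ r_{12}=\sum_{i,j}x_j\otimes x_i\succ y_j\otimes y_i$. A Connes cocycle on an associative algebra is an antisymmetric bilinear form $\omega$ with $\omega(uv,w)+\omega(vw,u)+\omega(wu,v)=0$. *)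

From HB Require Import structures.
From mathcomp Require Import all_boot all_order all_algebra.
Set Implicit Arguments. Unset Strict Implicit. Unset Printing Implicit Defensive.
Import GRing.Theory.
Local Open Scope ring_scope.

(* Conventions: A = K^n realised as row vectors 'rV[K]_n with standard basis
   e_i = delta_mx 0 i; A^dual also realised as 'rV[K]_n, paired with A by
   <a, x> = \sum_i a_i x_i (dual basis).  A bilinear product on A is given by
   its structure constants c : 'I_n -> 'I_n -> 'rV_n (covers every bilinear map). *)

Section Dend.
Variables (K : fieldType) (n : nat).
Notation V := 'rV[K]_n.

Definition bvec (i : 'I_n) : V := delta_mx 0 i.

Definition bil (c : 'I_n -> 'I_n -> V) (x y : V) : V :=
  \sum_(i < n) \sum_(j < n) (x 0 i * y 0 j) *: c i j.

Definition pair_d (a x : V) : K := \sum_(i < n) a 0 i * x 0 i.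

Definition dendriform (prec succ : V -> V -> V) : Prop :=
  forall x y z : V,
    [/\ prec (prec x y) z = prec x (prec y z + succ y z),
        prec (succ x y) z = succ x (prec y z) &
        succ x (succ y z) = succ (prec x y + succ x y) z].

(* <L_succ^dual(x) a, y> = <a, x succ y> ;  <R_prec^dual(x) a, y> = <a, y prec x> *)
Definition Lstar (succ : V -> V -> V) (x a : V) : V :=
  \row_(j < n) pair_d a (succ x (bvec j)).
Definition Rstar (prec : V -> V -> V) (x a : V) : V :=
  \row_(j < n) pair_d a (prec (bvec j) x).

(* r \in A (x) A as a coefficient matrix: r = \sum_{i,j} r i j e_i (x) e_j *)
Definition symmetric_tensor (r : 'M[K]_n) : Prop := r^T = r.

(* r as a map A^dual -> A : <u^dual, r(v^dual)> = <u^dual (x) v^dual, r> *)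
Definition rmap (r : 'M[K]_n) (v : V) : V :=
  \row_(i < n) \sum_(j < n) r i j * v 0 j.

Definition t3 (x y z : V) (a b c : 'I_n) : K := x 0 a * y 0 b * z 0 c.

(* writing r = \sum_{(i,j)} x_(i,j) (x) y_(i,j) with x_(i,j) = r i j e_i, y_(i,j) = e_j *)
Definition r12_mul_r13 (mul : V -> V -> V) (r : 'M[K]_n) (a b c : 'I_n) : K :=
  \sum_(i < n) \sum_(j < n) \sum_(k < n) \sum_(l < n)
    t3 (mul (r i j *: bvec i) (r k l *: bvec k)) (bvec j) (bvec l) a b c.
Definition r13_prec_r23 (prec : V -> V -> V) (r : 'M[K]_n) (a b c : 'I_n) : K :=
  \sum_(i < n) \sum_(j < n) \sum_(k < n) \sum_(l < n)
    t3 (r i j *: bvec i) (r k l *: bvec k) (prec (bvec j) (bvec l)) a b c.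
Definition r23_succ_r12 (succ : V -> V -> V) (r : 'M[K]_n) (a b c : 'I_n) : K :=
  \sum_(i < n) \sum_(j < n) \sum_(k < n) \sum_(l < n)
    t3 (r k l *: bvec k) (succ (r i j *: bvec i) (bvec l)) (bvec j) a b c.

Definition D_equation (prec succ : V -> V -> V) (r : 'M[K]_n) : Prop :=
  forall a b c : 'I_n,
    r12_mul_r13 (fun x y => prec x y + succ x y) r a b c
    = r13_prec_r23 prec r a b c + r23_succ_r12 succ r a b c.

Notation W := (V * V)%type.

Definition Tr_mul (prec succ : V -> V -> V) (r : 'M[K]_n) (u v : W) : W :=
  let mul x y := prec x y + succ x y in
  let: (x, a) := u in let: (y, b) := v in
  ((mul x y, 0)
  + (0, Rstar prec (rmap r a) b + Lstar succ (rmap r b) a)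
  + (mul x (rmap r b) - rmap r (Rstar prec x b), Rstar prec x b)
  + (mul (rmap r a) y - rmap r (Lstar succ y a), Lstar succ y a))%R.

Definition semidirect_mul (prec succ : V -> V -> V) (u v : W) : W :=
  let: (x, a) := u in let: (y, b) := v in
  (prec x y + succ x y, Rstar prec x b + Lstar succ y a).

Definition omega (u v : W) : K := - pair_d v.2 u.1 + pair_d u.2 v.1.

Definition associative_alg (mul : W -> W -> W) : Prop :=
  forall u v w : W, mul (mul u v) w = mul u (mul v w).

Definition connes_cocycle (mul : W -> W -> W) (om : W -> W -> K) : Prop :=
  (forall u v : W, om u v = - om v u) /\
  (forall u v w : W, om (mul u v) w + om (mul v w) u + om (mul w u) v = 0).

Definition alg_iso (mul1 mul2 : W -> W -> W) (phi : W -> W) : Prop :=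
  [/\ forall (k : K) (u v : W), phi (k *: u + v) = k *: phi u + phi v,
      bijective phi &
      forall u v : W, phi (mul1 u v) = mul2 (phi u) (phi v)].

End Dend.

(* A is K^n and A^* is K^n paired with A by <a, x> = sum_i a_i x_i.
   1. Both dendriform products are bilinear, and R_<^*, L_>^* are bilinear
      maps characterised by <R^*(x) a, w> = <a, w < x>, <L^*(x) a, w> = <a, x > w>.
   2. The semidirect product is associative (the three dendriform axioms,
      paired against a test vector) and omega is a cocycle on it (an
      identity valid for any bilinear products).
   3. Read coordinatewise on basis vectors, the D-equation for symmetric r
      says that r : A^* -> A is an O-operator:
        r(a) * r(b) = r(R_<^*(r a) b + L_>^*(r b) a);
      by bilinearity this holds for all a, b.
   4. The twist phi(x, a) = (x - r a, a) is a linear bijection which, by the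
      O-operator identity, carries the semidirect product to the product of
      T_r, and which preserves omega because r is symmetric.
   5. Associativity and the cocycle property transfer along phi. *)

From HB Require Import structures.
From mathcomp Require Import all_boot all_order all_algebra sesquilinear ring.
Import GRing.Theory.
Local Open Scope ring_scope.
Set Implicit Arguments. Unset Strict Implicit. Unset Printing Implicit Defensive.

Section LinearAlgebra.
Variables (K : fieldType) (n : nat).
Local Notation V := 'rV[K]_n.
Local Notation e := (@bvec K n).

Lemma bvecE (i j : 'I_n) : e j 0 i = (i == j)%:R.
Proof. by rewrite /bvec mxE eqxx. Qed.

Lemma scale_bvecE (k : K) (i a : 'I_n) : (k *: e i) 0 a = k * e i 0 a.
Proof. by rewrite mxE. Qed.

Lemma sum_indicator (G : 'I_n -> K) (b : 'I_n) :
  \sum_(i < n) G i * (i == b)%:R = G b.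
Proof.
rewrite (bigD1 b) //= eqxx mulr1 big1 ?addr0 // => i /negbTE ->.
by rewrite mulr0.
Qed.

Lemma sum_coord_bvec (G : 'I_n -> K) (b : 'I_n) :
  \sum_(i < n) G i * e b 0 i = G b.
Proof. by under eq_bigr do rewrite bvecE; exact: sum_indicator. Qed.

Lemma sum_bvec_coord (G : 'I_n -> K) (b : 'I_n) :
  \sum_(j < n) G j * e j 0 b = G b.
Proof. by under eq_bigr do rewrite bvecE eq_sym; exact: sum_indicator. Qed.

Lemma bil_is_bilinear (c : 'I_n -> 'I_n -> V) : bilinear_for
  (GRing.Scale.Law.clone _ _ *:%R _) (GRing.Scale.Law.clone _ _ *:%R _) (bil c).
Proof.
split=> [z|z] a x y; apply/rowP => m; rewrite !mxE !summxE mulr_sumr -big_split.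
all: apply: eq_bigr => i _; rewrite !summxE mulr_sumr -big_split.
all: by apply: eq_bigr => j _; rewrite !mxE /=; ring.
Qed.

HB.instance Definition _ (c : 'I_n -> 'I_n -> V) :=
  bilinear_isBilinear.Build K V V V _ _ (bil c) (bil_is_bilinear c).

Lemma pair_is_bilinear : bilinear_for
  (GRing.Scale.Law.clone _ _ *%R _) (GRing.Scale.Law.clone _ _ *%R _) (@pair_d K n).
Proof.
split=> [z|z] a x y; rewrite /pair_d /= mulr_sumr -big_split /=.
all: by apply: eq_bigr => i _; rewrite !mxE; ring.
Qed.

HB.instance Definition _ :=
  bilinear_isBilinear.Build K V V K _ _ (@pair_d K n) pair_is_bilinear.

Lemma pair_dDr (w x y : V) : pair_d w (x + y) = pair_d w x + pair_d w y.
Proof. exact: linearDr. Qed.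

Lemma pair_dNr (w x : V) : pair_d w (- x) = - pair_d w x.
Proof. exact: linearNr. Qed.

Lemma pair_dC (a x : V) : pair_d a x = pair_d x a.
Proof. by apply: eq_bigr => i _; rewrite mulrC. Qed.

Lemma pair_bvec (a : V) (j : 'I_n) : pair_d a (e j) = a 0 j.
Proof. exact: sum_coord_bvec. Qed.

Lemma dual_ext (a b : V) : (forall w, pair_d a w = pair_d b w) -> a = b.
Proof. by move=> ab_eq; apply/rowP => j; rewrite -!pair_bvec ab_eq. Qed.

Lemma dual_ext_r (x y : V) : (forall w, pair_d w x = pair_d w y) -> x = y.
Proof. by move=> xy_eq; apply: dual_ext => w; rewrite pair_dC xy_eq pair_dC. Qed.

Section DualActions.
Variable f : {bilinear V -> V -> V}.

Lemma pair_Rstar (x a w : V) : pair_d (Rstar f x a) w = pair_d a (f w x).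
Proof.
rewrite {2}(row_sum_delta w) linear_sumlz linear_sumr /=.
by apply: eq_bigr => j _; rewrite linearZl linearZr /= mxE mulrC.
Qed.

Lemma pair_Lstar (x a w : V) : pair_d (Lstar f x a) w = pair_d a (f x w).
Proof.
rewrite {2}(row_sum_delta w) linear_sumr linear_sumr /=.
by apply: eq_bigr => j _; rewrite !linearZr /= mxE mulrC.
Qed.

Lemma Rstar_is_bilinear : bilinear_for
  (GRing.Scale.Law.clone _ _ *:%R _) (GRing.Scale.Law.clone _ _ *:%R _) (Rstar f).
Proof.
split=> [a|x] k u v; apply: dual_ext => w; rewrite /= !linearPl /= !pair_Rstar.
  by rewrite !linearPr.
by rewrite !linearPl.
Qed.

Lemma Lstar_is_bilinear : bilinear_for
  (GRing.Scale.Law.clone _ _ *:%R _) (GRing.Scale.Law.clone _ _ *:%R _) (Lstar f).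
Proof.
split=> [a|x] k u v; apply: dual_ext => w; rewrite /= !linearPl /= !pair_Lstar.
  by rewrite linearPl linearPr.
by rewrite linearPl.
Qed.

End DualActions.

HB.instance Definition _ (f : {bilinear V -> V -> V}) :=
  bilinear_isBilinear.Build K V V V _ _ (Rstar f) (Rstar_is_bilinear f).
HB.instance Definition _ (f : {bilinear V -> V -> V}) :=
  bilinear_isBilinear.Build K V V V _ _ (Lstar f) (Lstar_is_bilinear f).

Section TensorAsMap.
Variable r : 'M[K]_n.

Lemma rmap_is_linear : linear (rmap r).
Proof.
move=> k u v; apply/rowP => i; rewrite !mxE mulr_sumr -big_split /=.
by apply: eq_bigr => j _; rewrite !mxE; ring.
Qed.

HB.instance Definition _ := GRing.isLinear.Build K V V _ (rmap r) rmap_is_linear.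

Lemma rmap_bvec (b : 'I_n) : rmap r (e b) = \sum_(i < n) r i b *: e i.
Proof.
apply/rowP => a; rewrite mxE summxE sum_coord_bvec.
by under eq_bigr do rewrite mxE; rewrite sum_bvec_coord.
Qed.

Hypothesis r_sym : symmetric_tensor r.

Lemma symmetric_tensorE (i j : 'I_n) : r i j = r j i.
Proof. by rewrite -[in LHS]r_sym mxE. Qed.

Lemma pair_rmap_sym (a b : V) : pair_d b (rmap r a) = pair_d a (rmap r b).
Proof.
rewrite /pair_d; under eq_bigr do rewrite mxE mulr_sumr.
under [RHS]eq_bigr do rewrite mxE mulr_sumr.
rewrite exchange_big /=; apply: eq_bigr => i _; apply: eq_bigr => j _.
by rewrite symmetric_tensorE; ring.
Qed.

End TensorAsMap.

End LinearAlgebra.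

Section BasisExtension.
Variables (K : fieldType) (n : nat) (W : lmodType K).
Local Notation V := 'rV[K]_n.
Local Notation e := (@bvec K n).

Lemma linear_basis_ext (f g : V -> W) : linear f -> linear g ->
  (forall b, f (e b) = g (e b)) -> f =1 g.
Proof.
move=> f_lin g_lin fg_e x.
pose fL : {linear V -> W} := HB.pack f (GRing.isLinear.Build K V W _ f f_lin).
pose gL : {linear V -> W} := HB.pack g (GRing.isLinear.Build K V W _ g g_lin).
rewrite (row_sum_delta x) -[f _]/(fL _) -[g _]/(gL _) !linear_sum.
by apply: eq_bigr => b _; rewrite !linearZ /= fg_e.
Qed.

Lemma bilinear_basis_ext (F G : V -> V -> W) :
  (forall q, linear (F ^~ q)) -> (forall p, linear (F p)) ->
  (forall q, linear (G ^~ q)) -> (forall p, linear (G p)) ->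
  (forall b c, F (e b) (e c) = G (e b) (e c)) -> forall p q, F p q = G p q.
Proof.
move=> Fl Fr Gl Gr FG_e p q; apply: (linear_basis_ext (Fl q) (Gl q)) => b.
exact: (linear_basis_ext (Fr _) (Gr _)).
Qed.

End BasisExtension.

Section Semidirect.
Variables (K : fieldType) (n : nat).
Variables prec succ : {bilinear 'rV[K]_n -> 'rV[K]_n -> 'rV[K]_n}.

(* Paired with w, the second component of the associator collects the three
   dendriform axioms evaluated at (w, x, y), (z, w, x) and (y, z, w). *)
Lemma semidirect_assoc :
  dendriform prec succ -> associative_alg (semidirect_mul prec succ).
Proof.
move=> dend [x a] [y b] [z c] /=; congr pair.
  have [assoc_prec mixed assoc_succ] := dend x y z.
  by rewrite linearDl /= assoc_prec mixed -assoc_succ !linearDr !addrA.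
apply: dual_ext => w; rewrite !linearDl /= !pair_Rstar !pair_Lstar.
rewrite !linearDl /= !pair_Rstar !pair_Lstar.
have [prec_wxy _ _] := dend w x y.
have [_ mixed_zwx _] := dend z w x.
have [_ _ succ_yzw] := dend y z w.
by rewrite prec_wxy mixed_zwx succ_yzw !(linearDr, linearDl) /= !addrA.
Qed.

Lemma semidirect_cocycle : connes_cocycle (semidirect_mul prec succ) (@omega K n).
Proof.
split=> [[x a] [y b]|[x a] [y b] [z c]]; rewrite /omega /=.
  by rewrite opprD opprK addrC.
by rewrite !(linearDl, linearDr) /= !pair_Rstar !pair_Lstar; ring.
Qed.

End Semidirect.

Section DEquationCoordinates.
Variables (K : fieldType) (n : nat) (r : 'M[K]_n).
Local Notation V := 'rV[K]_n.
Local Notation e := (@bvec K n).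

Lemma r12_mul_r13E (f : {bilinear V -> V -> V}) (a b c : 'I_n) :
  r12_mul_r13 f r a b c = f (rmap r (e b)) (rmap r (e c)) 0 a.
Proof.
rewrite !rmap_bvec linear_sumlz summxE /r12_mul_r13 /t3; apply: eq_bigr => i _.
under eq_bigr => j _ do under eq_bigr => k _ do rewrite sum_bvec_coord.
under eq_bigr => j _ do rewrite -mulr_suml.
rewrite sum_bvec_coord linear_sumr summxE.
by apply: eq_bigr => k _.
Qed.

Lemma r13_prec_r23E (f : {bilinear V -> V -> V}) (a b c : 'I_n) :
  symmetric_tensor r ->
  r13_prec_r23 f r a b c = rmap r (Rstar f (rmap r (e b)) (e c)) 0 a.
Proof.
move=> r_sym; rewrite mxE /r13_prec_r23 /t3 exchange_big /=; apply: eq_bigr => j _.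
rewrite mxE pair_dC pair_bvec rmap_bvec linear_sumr summxE mulr_sumr.
under eq_bigr => i _ do under eq_bigr => k _ do under eq_bigr => l _ do
  rewrite !scale_bvecE -mulrA.
under eq_bigr => i _ do under eq_bigr => k _ do rewrite -mulr_sumr.
under eq_bigr => i _ do rewrite -mulr_sumr.
rewrite -mulr_suml sum_bvec_coord -mulr_sumr exchange_big /=; congr (_ * _).
apply: eq_bigr => l _; rewrite -mulr_suml sum_bvec_coord linearZr mxE.
by rewrite /= (symmetric_tensorE r_sym b l).
Qed.

Lemma r23_succ_r12E (f : {bilinear V -> V -> V}) (a b c : 'I_n) :
  r23_succ_r12 f r a b c = rmap r (Lstar f (rmap r (e c)) (e b)) 0 a.
Proof.
rewrite mxE /r23_succ_r12 /t3 exchange_big /=.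
under eq_bigr => j _ do under eq_bigr => i _ do under eq_bigr => k _ do
  rewrite -mulr_suml.
under eq_bigr => j _ do under eq_bigr => i _ do rewrite -mulr_suml.
under eq_bigr => j _ do rewrite -mulr_suml.
rewrite sum_bvec_coord exchange_big /=.
under eq_bigr => k _ do rewrite exchange_big /=.
rewrite exchange_big /=; apply: eq_bigr => l _.
under eq_bigr => k _ do rewrite -mulr_sumr scale_bvecE.
by rewrite -mulr_suml sum_bvec_coord mxE pair_dC pair_bvec rmap_bvec linear_sumlz summxE.
Qed.

End DEquationCoordinates.

Section OOperator.
Variables (K : fieldType) (n : nat) (r : 'M[K]_n).
Variables prec succ : {bilinear 'rV[K]_n -> 'rV[K]_n -> 'rV[K]_n}.
Local Notation V := 'rV[K]_n.
Local Notation e := (@bvec K n).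

Lemma r12_mul_r13_sumE (a b c : 'I_n) :
  r12_mul_r13 (fun x y => prec x y + succ x y) r a b c =
  (prec (rmap r (e b)) (rmap r (e c)) + succ (rmap r (e b)) (rmap r (e c))) 0 a.
Proof.
rewrite mxE -!r12_mul_r13E /r12_mul_r13.
do 4 (rewrite -big_split /=; apply: eq_bigr => ? _).
by rewrite /t3 mxE !mulrDl.
Qed.

Hypotheses (r_sym : symmetric_tensor r) (r_D : D_equation prec succ r).

(* The D-equation at (a, b, c) is the a-th coordinate of the O-operator
   identity at (e_b, e_c) ... *)
Lemma O_operator_bvec (b c : 'I_n) :
  prec (rmap r (e b)) (rmap r (e c)) + succ (rmap r (e b)) (rmap r (e c)) =
  rmap r (Rstar prec (rmap r (e b)) (e c) + Lstar succ (rmap r (e c)) (e b)).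
Proof.
apply/rowP => a; rewrite -r12_mul_r13_sumE r_D linearD mxE.
by rewrite r13_prec_r23E // r23_succ_r12E.
Qed.

(* ... and both sides are bilinear in the two dual vectors. *)
Lemma O_operator (p q : V) :
  prec (rmap r p) (rmap r q) + succ (rmap r p) (rmap r q) =
  rmap r (Rstar prec (rmap r p) q + Lstar succ (rmap r q) p).
Proof.
move: p q; apply: bilinear_basis_ext O_operator_bvec => [q|p|q|p] k u v /=.
- by rewrite linearP !linearPl /= addrACA -scalerDr.
- by rewrite linearP !linearPr /= addrACA -scalerDr.
- by rewrite linearP linearPl linearPr /= addrACA -scalerDr linearP.
- by rewrite linearP linearPr linearPl /= addrACA -scalerDr linearP.
Qed.

End OOperator.

Section Twist.
Variables (K : fieldType) (n : nat) (r : 'M[K]_n).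
Variables prec succ : {bilinear 'rV[K]_n -> 'rV[K]_n -> 'rV[K]_n}.
Local Notation V := 'rV[K]_n.

Definition twist (u : V * V) : V * V := (u.1 - rmap r u.2, u.2).

Lemma add_pairE (x a y b : V) : (x, a) + (y, b) = (x + y, a + b).
Proof. by []. Qed.

Hypothesis r_sym : symmetric_tensor r.

Lemma twist_omega (u v : V * V) : omega (twist u) (twist v) = omega u v.
Proof.
case: u v => [x a] [y b]; rewrite /omega /twist /= !linearBr /=.
by rewrite (pair_rmap_sym r_sym a b); ring.
Qed.

Hypothesis r_D : D_equation prec succ r.

(* After expanding by bilinearity, the only non-formal step is the
   O-operator identity at (a, b); the remaining identity is checked after
   pairing with an arbitrary test vector w. *)
Lemma twist_hom (u v : V * V) :
  twist (semidirect_mul prec succ u v) = Tr_mul prec succ r (twist u) (twist v).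
Proof.
case: u v => [x a] [y b]; rewrite /twist /Tr_mul /semidirect_mul /= !add_pairE.
have O_ab := canRL (addrK _) (O_operator r_sym r_D a b).
rewrite !linearBl !linearBr /= O_ab !(raddfB (rmap r)) !(raddfD (rmap r)).
by congr pair; apply: dual_ext_r => w; rewrite !(pair_dDr, pair_dNr) ?linear0r; ring.
Qed.

Lemma twist_iso : alg_iso (semidirect_mul prec succ) (Tr_mul prec succ r) twist.
Proof.
split; last exact: twist_hom.
  move=> k [x a] [y b]; rewrite add_pairE /twist /=; congr pair.
  by rewrite linearP /= scalerBr opprD addrACA.
exists (fun u => (u.1 + rmap r u.2, u.2)).
  by case=> x a; rewrite /twist /= subrK.
by case=> x a; rewrite /twist /= addrK.
Qed.

End Twist.

Section Transport.
Variables (K : fieldType) (n : nat).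
Local Notation W := ('rV[K]_n * 'rV[K]_n)%type.
Variables (mul1 mul2 : W -> W -> W) (phi : W -> W).
Hypotheses (phi_iso : alg_iso mul1 mul2 phi)
  (phi_omega : forall u v, omega (phi u) (phi v) = omega u v).

Lemma iso_assoc : associative_alg mul1 -> associative_alg mul2.
Proof.
have [_ [psi _ psiK] phi_mul] := phi_iso.
move=> assoc1 u v w; rewrite -(psiK u) -(psiK v) -(psiK w).
by rewrite -!phi_mul assoc1.
Qed.

Lemma iso_cocycle :
  connes_cocycle mul1 (@omega K n) -> connes_cocycle mul2 (@omega K n).
Proof.
have [_ [psi _ psiK] phi_mul] := phi_iso.
move=> [anti1 cyc1]; split=> [u v|u v w]; rewrite -(psiK u) -(psiK v).
  by rewrite !phi_omega; apply: anti1.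
by rewrite -(psiK w) -!phi_mul !phi_omega; apply: cyc1.
Qed.

End Transport.

Unset Implicit Arguments.

Theorem theorem4p4p16 (K : fieldType) (n : nat)
  (cprec csucc : 'I_n -> 'I_n -> 'rV[K]_n) (r : 'M[K]_n) :
  let prec := bil cprec in
  let succ := bil csucc in
  dendriform prec succ ->
  symmetric_tensor r ->
  D_equation prec succ r ->
  [/\ associative_alg (semidirect_mul prec succ),
      associative_alg (Tr_mul prec succ r),
      connes_cocycle (semidirect_mul prec succ) (@omega K n),
      connes_cocycle (Tr_mul prec succ r) (@omega K n) &
      exists phi : ('rV[K]_n * 'rV[K]_n)%type -> ('rV[K]_n * 'rV[K]_n)%type,
        alg_iso (semidirect_mul prec succ) (Tr_mul prec succ r) phi /\
        (forall u v, omega (phi u) (phi v) = omega u v)].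
Proof.
move=> prec succ dend r_sym r_D.
have sd_assoc := semidirect_assoc dend.
have sd_cocycle := semidirect_cocycle (bil cprec) (bil csucc).
have phi_iso := twist_iso r_sym r_D.
have phi_omega := twist_omega r_sym.
split.
- exact: sd_assoc.
- exact: iso_assoc phi_iso sd_assoc.
- exact: sd_cocycle.
- exact: iso_cocycle phi_iso phi_omega sd_cocycle.
- by exists (twist r).
Qed.
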